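(* Assume (F) and (H), let $\varepsilon>0$, and let $c$ be an admissible speed. Then: - $c\ge0$; - $cv+h(v)-F(v)>0$ for every $v\in(0,1)$, where $F(v)=\int_0^v f(s)\,ds$; - the solution $y$ of (P1) satisfies $y(v)\le\sqrt{\varepsilon^2+(cv+h(v)-F(v))^2}-\varepsilon$ on $[0,1]$; - consequently $c\ge\sup_{v\in(0,1]}\frac{F(v)-h(v)}{v}$.
   Context: Assumptions. - (F): $f\in C([0,1])$, $f(0)=f(1)=0$, $f(s)>0$ for $s\in(0,1)$, and there is $k>0$ with $f(s)\le ks$ and $f(s)\le k(1-s)$ for all $s\in[0,1]$. - (H): $h\in C^2([0,1])$ with $h(0)=h'(0)=0$. Problem (P1): $y'=(c+h'(v))\frac{\sqrt{y(2\varepsilon+y)}}{\varepsilon+y}-f(v)$ on $[0,1]$, $y(0)=y(1)=0$, $y>0$ on $(0,1)$. A speed $c\in\mathbb R$ is admissible if (P1) has a solution. *)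

From Stdlib Require Import Reals Lra.
From Coquelicot Require Import Coquelicot.
Open Scope R_scope.

Definition I01 (x : R) : Prop := 0 <= x <= 1.

Definition cont_on01 (g : R -> R) : Prop :=
  forall x, I01 x -> filterlim g (within I01 (locally x)) (locally (g x)).

Definition HypF (f : R -> R) : Prop :=
  cont_on01 f /\ f 0 = 0 /\ f 1 = 0 /\
  (forall s, 0 < s < 1 -> 0 < f s) /\
  exists k, 0 < k /\ forall s, I01 s -> f s <= k * s /\ f s <= k * (1 - s).

(* Assumption (H): h in C^2([0,1]) with derivatives dh, d2h
   (derivatives on (0,1) extending continuously to [0,1]),
   h(0) = h'(0) = 0. *)
Definition HypH (h dh d2h : R -> R) : Prop :=
  cont_on01 h /\ cont_on01 dh /\ cont_on01 d2h /\
  (forall v, 0 < v < 1 -> is_derive h v (dh v) /\ is_derive dh v (d2h v)) /\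
  h 0 = 0 /\ dh 0 = 0.

Definition rhsP1 (f dh : R -> R) (eps c v y : R) : R :=
  (c + dh v) * sqrt (y * (2 * eps + y)) / (eps + y) - f v.

Definition SolP1 (f dh : R -> R) (eps c : R) (y : R -> R) : Prop :=
  cont_on01 y /\
  (forall v, 0 < v < 1 -> is_derive y v (rhsP1 f dh eps c v (y v))) /\
  y 0 = 0 /\ y 1 = 0 /\ (forall v, 0 < v < 1 -> 0 < y v).

Definition admissible (f dh : R -> R) (eps c : R) : Prop :=
  exists y, SolP1 f dh eps c y.

Definition Fprim (f : R -> R) (v : R) : R := RInt f 0 v.

From Stdlib Require Import Reals Lra Psatz.
From Coquelicot Require Import Coquelicot.
Open Scope R_scope.

(* Write G(v) = c v + h(v) - F(v) for the "gap" and
   E(Y) = sqrt (Y (2 eps + Y)) for the "energy" of a level Y >= 0, so that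
   (eps + Y)^2 = eps^2 + E(Y)^2.  Along a solution y of (P1), the function
   w = G - E o y satisfies
        w' = f (eps + y - E(y)) / E(y) > 0   on (0,1),
   and w(0) = 0, hence E(y(v)) < G(v) on (0,1).  This gives G > 0 on (0,1)
   and, squaring, the bound y <= sqrt (eps^2 + G^2) - eps.  If c < 0, then
   G' = c + h' - f < 0 near 0 (as h'(0) = 0), so G < 0 there: contradiction.
   Finally G(1) >= 0 by continuity, hence (F(v) - h(v)) / v <= c on (0,1].

   To use Coquelicot's calculus on R, functions given on [0,1] are extended
   by composition with the clamp x |-> max 0 (min 1 x), and F is replaced by
   the integral of the extended f. *)

Definition clamp01 (x : R) : R := Rmax 0 (Rmin 1 x).

Lemma clamp01_id x : I01 x -> clamp01 x = x.
Proof. unfold I01, clamp01, Rmax, Rmin; intros; repeat destruct Rle_dec; lra. Qed.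

Lemma clamp01_I01 x : I01 (clamp01 x).
Proof. unfold I01, clamp01, Rmax, Rmin; repeat destruct Rle_dec; lra. Qed.

Lemma clamp01_lipschitz a b : Rabs (clamp01 a - clamp01 b) <= Rabs (a - b).
Proof.
  unfold clamp01, Rmax, Rmin; repeat destruct Rle_dec;
  unfold Rabs; repeat destruct Rcase_abs; lra.
Qed.

Lemma continuous_clamp01 g : cont_on01 g -> forall x, continuous (fun t => g (clamp01 t)) x.
Proof.
  intros Hg x.
  apply (filterlim_comp _ _ _ clamp01 g _ (within I01 (locally (clamp01 x)))).
  - intros P [e He]. exists e. intros t Ht.
    apply He; [|apply clamp01_I01]. change (Rabs (clamp01 t - clamp01 x) < e).
    eapply Rle_lt_trans; [apply clamp01_lipschitz|]. exact Ht.
  - apply Hg, clamp01_I01.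
Qed.

Lemma clamp01_locally x : 0 < x < 1 -> locally x (fun t => clamp01 t = t).
Proof.
  intros Hx. assert (He : 0 < Rmin x (1 - x)) by (apply Rmin_glb_lt; lra).
  exists (mkposreal _ He). intros t Ht. change (Rabs (t - x) < Rmin x (1 - x)) in Ht.
  pose proof (Rmin_l x (1 - x)). pose proof (Rmin_r x (1 - x)).
  apply clamp01_id. unfold I01. unfold Rabs in Ht; destruct Rcase_abs; lra.
Qed.

Lemma is_derive_clamp01 (g : R -> R) (l x : R) : 0 < x < 1 -> is_derive g x l ->
  is_derive (fun t => g (clamp01 t)) x l.
Proof.
  intros Hx Hd. apply is_derive_ext_loc with g; [|exact Hd].
  apply (filter_imp _ _ (fun t Ht => eq_sym (f_equal g Ht))), clamp01_locally, Hx.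
Qed.

Definition Fext (f : R -> R) (t : R) : R := RInt (fun s => f (clamp01 s)) 0 t.

Lemma is_derive_Fext f x : cont_on01 f -> is_derive (Fext f) x (f (clamp01 x)).
Proof.
  intros Hf.
  apply (is_derive_RInt (V := R_CompleteNormedModule) (fun s => f (clamp01 s)) (Fext f) 0).
  - apply filter_forall. intros b. apply RInt_correct, ex_RInt_continuous.
    intros z _. apply continuous_clamp01, Hf.
  - apply continuous_clamp01, Hf.
Qed.

Lemma Fext_Fprim f v : I01 v -> Fext f v = Fprim f v.
Proof.
  intros Hv. apply RInt_ext. intros x Hx.
  rewrite Rmin_left, Rmax_right in Hx by (unfold I01 in Hv; lra).
  f_equal. apply clamp01_id. unfold I01 in *; lra.
Qed.

Lemma increasing_of_derive_pos (g dg : R -> R) a b : a < b ->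
  (forall x, a < x < b -> is_derive g x (dg x)) ->
  (forall x, a <= x <= b -> continuous g x) ->
  (forall x, a < x < b -> 0 < dg x) -> g a < g b.
Proof.
  intros Hab Hd Hc Hp.
  set (dg' := fun x => if Rlt_dec a x then if Rlt_dec x b then dg x else 1 else 1).
  assert (Hpos : forall x, 0 < dg' x).
  { intros x. unfold dg'. destruct Rlt_dec; [destruct Rlt_dec|]; try lra. apply Hp; lra. }
  destruct (MVT_gen g a b dg') as [x [_ Heq]];
    rewrite ?Rmin_left, ?Rmax_right by lra.
  - intros x Hx. unfold dg'. destruct Rlt_dec; [destruct Rlt_dec|]; try lra. apply Hd; lra.
  - intros x Hx. apply continuity_pt_filterlim, Hc, Hx.
  - specialize (Hpos x). nra.
Qed.

Lemma continuous_lt_locally (g : R -> R) x a : continuous g x -> g x < a ->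
  exists d, 0 < d /\ forall t, Rabs (t - x) < d -> g t < a.
Proof.
  intros Hc Hlt. assert (He : 0 < a - g x) by lra.
  destruct (proj1 (filterlim_locally g (g x)) Hc (mkposreal _ He)) as [d Hd].
  exists d. split; [apply cond_pos|]. intros t Ht.
  specialize (Hd t Ht). change (Rabs (g t - g x) < a - g x) in Hd.
  apply Rabs_def2 in Hd. lra.
Qed.

Lemma nonneg_at_right_end (g : R -> R) a b : a < b -> continuous g b ->
  (forall t, a < t < b -> 0 < g t) -> 0 <= g b.
Proof.
  intros Hab Hc Hpos. destruct (Rle_or_lt 0 (g b)) as [Hb|Hb]; [exact Hb|exfalso].
  destruct (continuous_lt_locally g b 0 Hc Hb) as [d [Hd Hnear]].
  set (t := Rmax ((a + b) / 2) (b - d / 2)).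
  assert (Ht1 : (a + b) / 2 <= t) by apply Rmax_l.
  assert (Ht2 : b - d / 2 <= t) by apply Rmax_r.
  assert (Ht3 : t < b) by (apply Rmax_lub_lt; lra).
  specialize (Hnear t ltac:(rewrite Rabs_left; lra)).
  specialize (Hpos t ltac:(lra)). lra.
Qed.

Definition gap (f h : R -> R) (c t : R) : R := c * t + h (clamp01 t) - Fext f t.

Lemma gap_on01 f h c v : I01 v -> gap f h c v = c * v + h v - Fprim f v.
Proof. intros Hv. unfold gap. rewrite clamp01_id, Fext_Fprim by exact Hv. reflexivity. Qed.

Lemma gap_0 f h c : h 0 = 0 -> gap f h c 0 = 0.
Proof.
  intros Hh0. rewrite gap_on01 by (unfold I01; lra).
  unfold Fprim. rewrite RInt_point, Hh0. unfold zero; simpl. ring.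
Qed.

Lemma continuous_gap f h c x : cont_on01 f -> cont_on01 h -> continuous (gap f h c) x.
Proof.
  intros Hf Hh.
  apply (continuous_minus (fun t => c * t + h (clamp01 t)) (Fext f)).
  - apply (continuous_plus (fun t => c * t) (fun t => h (clamp01 t))).
    + apply (continuous_mult (fun _ => c) (fun t => t)); [apply continuous_const|apply continuous_id].
    + apply continuous_clamp01, Hh.
  - exact (ex_derive_continuous _ _ (ex_intro _ _ (is_derive_Fext f x Hf))).
Qed.

Lemma is_derive_gap f h dh c x : cont_on01 f -> 0 < x < 1 -> is_derive h x (dh x) ->
  is_derive (gap f h c) x (c + dh x - f x).
Proof.
  intros Hf Hx Hh.
  replace (f x) with (f (clamp01 x)) by (rewrite clamp01_id; unfold I01; lra).
  apply (is_derive_minus (fun t => c * t + h (clamp01 t)) (Fext f)).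
  - apply (is_derive_plus (fun t => c * t) (fun t => h (clamp01 t))).
    + auto_derive; [exact I | ring].
    + apply is_derive_clamp01; assumption.
  - apply is_derive_Fext, Hf.
Qed.

(* The energy E(Y) = sqrt (Y (2 eps + Y)) of a level Y, the quantity for
   which (eps + Y)^2 = eps^2 + E(Y)^2; the ODE reads y' = (c + h') E(y)/(eps + y) - f. *)
Definition energy (eps Y : R) : R := sqrt (Y * (2 * eps + Y)).

Lemma energy_0 eps : energy eps 0 = 0.
Proof. unfold energy. rewrite Rmult_0_l. exact sqrt_0. Qed.

Lemma energy_bounds eps Y : 0 < eps -> 0 < Y -> 0 < energy eps Y < eps + Y.
Proof.
  intros He HY. unfold energy. split; [apply sqrt_lt_R0; nra|].
  rewrite <- (sqrt_pow2 (eps + Y)) by lra. apply sqrt_lt_1_alt. nra.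
Qed.

Lemma is_derive_energy eps (y : R -> R) x l : 0 <= eps -> 0 < y x -> is_derive y x l ->
  is_derive (fun t => energy eps (y t)) x (l * (eps + y x) / energy eps (y x)).
Proof.
  intros He Hy Hd. unfold energy.
  replace (l * (eps + y x) / sqrt (y x * (2 * eps + y x)))
    with ((l * (2 * eps + y x) + y x * (0 + l)) / (2 * sqrt (y x * (2 * eps + y x)))).
  2:{ field. apply Rgt_not_eq, sqrt_lt_R0. nra. }
  apply (is_derive_sqrt (fun t => y t * (2 * eps + y t))); [|nra].
  apply (is_derive_mult y (fun t => 2 * eps + y t)); [exact Hd| |exact Rmult_comm].
  apply (is_derive_plus (fun _ => 2 * eps) y); [exact (is_derive_const (2 * eps) x)|exact Hd].
Qed.

Lemma continuous_energy eps (y : R -> R) x : 0 <= eps -> 0 <= y x -> continuous y x ->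
  continuous (fun t => energy eps (y t)) x.
Proof.
  intros He Hy Hc. unfold energy.
  apply (continuous_comp (fun t => y t * (2 * eps + y t)) sqrt).
  - apply (continuous_mult y (fun t => 2 * eps + y t)); [exact Hc|].
    apply (continuous_plus (fun _ => 2 * eps) y); [apply continuous_const|exact Hc].
  - apply continuity_pt_filterlim, continuity_pt_sqrt. nra.
Qed.

(* Algebraic core: along the ODE, G' - (E o y)' = f (eps + Y - E(Y)) / E(Y) > 0. *)
Lemma drift_pos f dh eps c v Y : 0 < eps -> 0 < Y -> 0 < f v ->
  0 < c + dh v - f v - rhsP1 f dh eps c v Y * (eps + Y) / energy eps Y.
Proof.
  intros He HY Hf. destruct (energy_bounds eps Y He HY) as [Hs0 Hs1].
  unfold rhsP1. fold (energy eps Y).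
  replace (c + dh v - f v - ((c + dh v) * energy eps Y / (eps + Y) - f v) * (eps + Y) / energy eps Y)
    with (f v * (eps + Y - energy eps Y) / energy eps Y) by (field; lra).
  apply Rdiv_lt_0_compat; [apply Rmult_lt_0_compat|]; lra.
Qed.

(* A level Y >= 0 whose energy is dominated by |A| lies below the bound of
   the theorem, since (eps + Y)^2 = eps^2 + E(Y)^2. *)
Lemma level_bound eps Y A : 0 < eps -> 0 <= Y -> Y * (2 * eps + Y) <= A ^ 2 ->
  Y <= sqrt (eps ^ 2 + A ^ 2) - eps.
Proof.
  intros He HY HA. enough (eps + Y <= sqrt (eps ^ 2 + A ^ 2)) by lra.
  rewrite <- (sqrt_pow2 (eps + Y)) by lra. apply sqrt_le_1_alt. nra.
Qed.

Lemma ratio_le_speed f h c v : 0 < v -> 0 <= c * v + h v - Fprim f v ->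
  (Fprim f v - h v) / v <= c.
Proof.
  intros Hv Hg. apply Rmult_le_reg_r with v; [exact Hv|].
  unfold Rdiv. rewrite Rmult_assoc, Rinv_l by lra. lra.
Qed.

Section AdmissibleSpeed.

Variables (f h dh : R -> R) (eps c : R).
Hypothesis Hfc : cont_on01 f.
Hypothesis Hfp : forall s, 0 < s < 1 -> 0 < f s.
Hypothesis Hhc : cont_on01 h.
Hypothesis Hhd : forall s, 0 < s < 1 -> is_derive h s (dh s).
Hypothesis Hh0 : h 0 = 0.

Lemma SolP1_nonneg y v : SolP1 f dh eps c y -> I01 v -> 0 <= y v.
Proof.
  intros [_ [_ [Hy0 [Hy1 Hpos]]]] [H0 H1].
  destruct (Rle_lt_or_eq_dec 0 v H0) as [Hl|Hv]; [|subst v; lra].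
  destruct (Rle_lt_or_eq_dec v 1 H1) as [Hl'|Hv]; [|subst v; lra].
  left; apply Hpos; lra.
Qed.

(* The comparison principle: the energy of a solution stays below the gap,
   because G - E o y vanishes at 0 and increases on (0,1). *)
Lemma energy_lt_gap y v : 0 < eps -> SolP1 f dh eps c y -> 0 < v < 1 ->
  energy eps (y v) < gap f h c v.
Proof.
  intros He Hsol Hv.
  pose proof Hsol as [Hyc [Hyd [Hy0 _]]].
  set (w := fun t => gap f h c t - energy eps (y (clamp01 t))).
  assert (Hw : w 0 < w v).
  { apply (increasing_of_derive_pos w
      (fun t => c + dh t - f t - rhsP1 f dh eps c t (y t) * (eps + y t) / energy eps (y t)));
      [lra| | |].
    - intros x Hx. assert (Hx1 : 0 < x < 1) by lra.
      assert (Hyx : 0 < y x) by (apply Hsol; exact Hx1).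
      apply (is_derive_minus (gap f h c) (fun t => energy eps (y (clamp01 t)))).
      + apply is_derive_gap; [exact Hfc|exact Hx1|apply Hhd, Hx1].
      + apply (is_derive_clamp01 (fun t => energy eps (y t))); [exact Hx1|].
        apply is_derive_energy; [lra|exact Hyx|apply Hyd, Hx1].
    - intros x _.
      apply (continuous_minus (gap f h c) (fun t => energy eps (y (clamp01 t)))).
      + apply continuous_gap; assumption.
      + apply continuous_energy; [lra| |apply continuous_clamp01, Hyc].
        apply SolP1_nonneg; [exact Hsol|apply clamp01_I01].
    - intros x Hx. assert (Hx1 : 0 < x < 1) by lra.
      apply drift_pos; [exact He|apply Hsol, Hx1|apply Hfp, Hx1]. }
  unfold w in Hw. rewrite gap_0, !clamp01_id, Hy0, energy_0 in Hw by (unfold I01; lra).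
  lra.
Qed.

Lemma energy_sq_le_gap_sq y v : 0 < eps -> SolP1 f dh eps c y -> I01 v ->
  y v * (2 * eps + y v) <= gap f h c v ^ 2.
Proof.
  intros He Hsol Hv.
  pose proof Hsol as [_ [_ [Hy0 [Hy1 _]]]].
  destruct (Rle_lt_or_eq_dec 0 v (proj1 Hv)) as [Hl|Hv0]; [|subst v; rewrite Hy0; nra].
  destruct (Rle_lt_or_eq_dec v 1 (proj2 Hv)) as [Hl'|Hv1]; [|subst v; rewrite Hy1; nra].
  pose proof (energy_lt_gap y v He Hsol (conj Hl Hl')) as Hlt.
  assert (Hsq : energy eps (y v) * energy eps (y v) = y v * (2 * eps + y v)).
  { apply sqrt_sqrt. pose proof (SolP1_nonneg y v Hsol Hv). nra. }
  pose proof (sqrt_pos (y v * (2 * eps + y v))). fold (energy eps (y v)) in *. nra.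
Qed.

(* A positive gap on (0,1) forces c >= 0: for c < 0 the gap, which vanishes
   at 0, would be decreasing near 0 since G' = c + h' - f and h'(0) = 0. *)
Lemma speed_nonneg : cont_on01 dh -> dh 0 = 0 ->
  (forall v, 0 < v < 1 -> 0 < gap f h c v) -> 0 <= c.
Proof.
  intros Hdhc Hdh0 Hgap.
  destruct (Rle_or_lt 0 c) as [Hc|Hc]; [exact Hc|exfalso].
  destruct (continuous_lt_locally (fun t => dh (clamp01 t)) 0 (- c)
              (continuous_clamp01 dh Hdhc 0)) as [d [Hd Hnear]].
  { rewrite clamp01_id, Hdh0 by (unfold I01; lra). lra. }
  set (v := Rmin (d / 2) (1 / 2)).
  assert (Hv1 : v <= d / 2) by apply Rmin_l.
  assert (Hv2 : v <= 1 / 2) by apply Rmin_r.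
  assert (Hv0 : 0 < v) by (apply Rmin_glb_lt; lra).
  assert (Hdecr : - gap f h c 0 < - gap f h c v).
  { apply (increasing_of_derive_pos (fun t => - gap f h c t) (fun t => - (c + dh t - f t)));
      [exact Hv0| | |].
    - intros x Hx. apply (is_derive_opp (gap f h c)).
      apply is_derive_gap; [exact Hfc|lra|apply Hhd; lra].
    - intros x _. apply (continuous_opp (gap f h c)), continuous_gap; assumption.
    - intros x Hx. specialize (Hnear x ltac:(rewrite Rminus_0_r, Rabs_pos_eq; lra)).
      rewrite clamp01_id in Hnear by (unfold I01; lra).
      specialize (Hfp x ltac:(lra)). lra. }
  rewrite gap_0 in Hdecr by exact Hh0.
  specialize (Hgap v ltac:(lra)). lra.
Qed.

End AdmissibleSpeed.

Theorem mainTheorem3 (f h dh d2h : R -> R) (eps c : R) :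
  HypF f -> HypH h dh d2h -> 0 < eps -> admissible f dh eps c ->
  0 <= c /\
  (forall v, 0 < v < 1 -> c * v + h v - Fprim f v > 0) /\
  (forall y, SolP1 f dh eps c y ->
     forall v, 0 <= v <= 1 ->
       y v <= sqrt (eps ^ 2 + (c * v + h v - Fprim f v) ^ 2) - eps) /\
  Rbar_le (Lub_Rbar (fun r => exists v, 0 < v <= 1 /\ r = (Fprim f v - h v) / v))
          (Finite c).
Proof.
  intros [Hfc [_ [_ [Hfp _]]]] [Hhc [Hdhc [_ [Hhd2 [Hh0 Hdh0]]]]] He [y0 Hy0].
  assert (Hhd : forall s, 0 < s < 1 -> is_derive h s (dh s)) by (intros s Hs; apply Hhd2, Hs).
  assert (Hgap : forall v, 0 < v < 1 -> 0 < gap f h c v).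
  { intros v Hv. eapply Rle_lt_trans; [apply sqrt_pos|].
    exact (energy_lt_gap f h dh eps c Hfc Hfp Hhc Hhd Hh0 y0 v He Hy0 Hv). }
  assert (Hgap1 : 0 <= gap f h c 1).
  { apply (nonneg_at_right_end _ 0 1); [lra|apply continuous_gap; assumption|exact Hgap]. }
  split; [exact (speed_nonneg f h dh c Hfc Hfp Hhc Hhd Hh0 Hdhc Hdh0 Hgap)|].
  split; [intros v Hv; rewrite <- gap_on01 by (unfold I01; lra); apply Hgap, Hv|].
  split.
  - intros y Hy v Hv. rewrite <- gap_on01 by exact Hv.
    apply level_bound; [exact He|exact (SolP1_nonneg f dh eps c y v Hy Hv)|].
    exact (energy_sq_le_gap_sq f h dh eps c Hfc Hfp Hhc Hhd Hh0 y v He Hy Hv).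
  - apply Lub_Rbar_correct. intros r [v [Hv ->]]. simpl.
    apply ratio_le_speed; [lra|].
    rewrite <- gap_on01 by (unfold I01; lra).
    destruct (Rle_lt_or_eq_dec v 1 (proj2 Hv)) as [Hlt|Heq].
    + left; apply Hgap; lra.
    + subst v; exact Hgap1.
Qed.
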